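(* A Banach $f$-algebra $E$ is $mw$-continuous if and only if, for every net $(x_\alpha)$ in $E$, $x_\alpha\downarrow0$ implies $x_\alpha\xrightarrow{mw}0$.
   Context: All vector lattices are real and Archimedean. An $f$-algebra is a vector lattice with an associative multiplication making it an algebra, such that products of positive elements are positive and $x\wedge y=0$ implies $(xz)\wedge y=(zx)\wedge y=0$ for all $z\ge0$. A Banach $f$-algebra is an $f$-algebra which is a Banach lattice with $\|xy\|\le\|x\|\|y\|$. A net $(x_\alpha)$ in $E$ $mw$-converges to $x$ ($x_\alpha\xrightarrow{mw}x$) if $|x_\alpha-x|u\to0$ weakly for every $u\in E_+$. A net $(x_\alpha)$ order converges to $x$ ($x_\alpha\xrightarrow{o}x$) if there is a net $y_\beta\downarrow0$ such that for every $\beta$ there is $\alpha_0$ with $|x_\alpha-x|\le y_\beta$ for all $\alpha\ge\alpha_0$. $E$ is called $mw$-continuous if $x_\alpha\xrightarrow{o}0$ implies $x_\alpha\xrightarrow{mw}0$. *)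

From HB Require Import structures.
From mathcomp Require Import all_boot all_order all_algebra.
From mathcomp Require Import all_classical all_reals all_analysis.
Import Order.TTheory GRing.Theory Num.Theory.
Import numFieldNormedType.Exports.
Local Open Scope ring_scope.

Definition directed {D : Type} (leD : D -> D -> Prop) : Prop :=
  [/\ inhabited D,
      (forall a, leD a a),
      (forall a b c, leD a b -> leD b c -> leD a c) &
      (forall a b, exists c, leD a c /\ leD b c)].

Definition net_cvgR {R : realType} {D : Type} (leD : D -> D -> Prop)
  (r : D -> R) (l : R) : Prop :=
  forall e : R, 0 < e -> exists a0, forall a, leD a0 a -> `|r a - l| < e.

Definition is_clf {R : realType} {E : normedModType R} (f : E -> R) : Prop :=
  [/\ (forall x y, f (x + y) = f x + f y),
      (forall (a : R) x, f (a *: x) = a * f x) &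
      continuous f].

Definition weak_cvg {R : realType} {E : normedModType R}
  {D : Type} (leD : D -> D -> Prop) (x : D -> E) (l : E) : Prop :=
  forall f : E -> R, is_clf f -> net_cvgR leD (fun a => f (x a)) (f l).

Section LatticeAlgebra.
Context {R : realType} {E : normedModType R}.
Variables (le : E -> E -> Prop) (join : E -> E -> E) (mul : E -> E -> E).

Definition lat_meet (x y : E) : E := - join (- x) (- y).
Definition lat_abs (x : E) : E := join x (- x).

Definition vector_lattice : Prop :=
  (forall x, le x x) /\
  (forall x y, le x y -> le y x -> x = y) /\
  (forall x y z, le x y -> le y z -> le x z) /\
  (forall x y z, le x y -> le (x + z) (y + z)) /\
  (forall (a : R) x y, 0 <= a -> le x y -> le (a *: x) (a *: y)) /\
  (forall x y, le x (join x y) /\ le y (join x y) /\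
               (forall z, le x z -> le y z -> le (join x y) z)) /\
  (forall x y, le 0 x -> le 0 y -> (forall n : nat, le (x *+ n) y) -> x = 0).

Definition f_algebra : Prop :=
  vector_lattice /\
  (forall x y z, mul (mul x y) z = mul x (mul y z)) /\
  (forall x y z, mul (x + y) z = mul x z + mul y z) /\
  (forall x y z, mul x (y + z) = mul x y + mul x z) /\
  (forall (a : R) x y, mul (a *: x) y = a *: mul x y /\ mul x (a *: y) = a *: mul x y) /\
  (forall x y, le 0 x -> le 0 y -> le 0 (mul x y)) /\
  (forall x y z, lat_meet x y = 0 -> le 0 z ->
     lat_meet (mul x z) y = 0 /\ lat_meet (mul z x) y = 0).

(** Banach f-algebra (completeness of E is imposed by its type in the theorem). *)
Definition banach_f_algebra : Prop :=
  [/\ f_algebra,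
      (forall x y, le (lat_abs x) (lat_abs y) -> `|x| <= `|y|) &
      (forall x y, `|mul x y| <= `|x| * `|y|)].

Definition mw_cvg {D : Type} (leD : D -> D -> Prop) (x : D -> E) (l : E) : Prop :=
  forall u, le 0 u -> weak_cvg leD (fun a => mul (lat_abs (x a - l)) u) 0.

Definition decr_to_0 {D : Type} (leD : D -> D -> Prop) (y : D -> E) : Prop :=
  [/\ (forall a b, leD a b -> le (y b) (y a)),
      (forall a, le 0 (y a)) &
      (forall z, (forall a, le z (y a)) -> le z 0)].

Definition order_cvg {D : Type} (leD : D -> D -> Prop) (x : D -> E) (l : E) : Prop :=
  exists (B : Type) (leB : B -> B -> Prop) (y : B -> E),
    [/\ directed leB, decr_to_0 leB y &
        forall b, exists a0, forall a, leD a0 a -> le (lat_abs (x a - l)) (y b)].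

Definition mw_continuous : Prop :=
  forall (D : Type) (leD : D -> D -> Prop), directed leD ->
    forall x : D -> E, order_cvg leD x 0 -> mw_cvg leD x 0.

End LatticeAlgebra.

From HB Require Import structures.
From mathcomp Require Import all_boot all_order all_algebra.
From mathcomp Require Import all_classical all_reals all_analysis.
From mathcomp Require Import lra.
Import Order.TTheory GRing.Theory Num.Theory.
Import numFieldNormedType.Exports.
Local Open Scope ring_scope.

(* (=>) A net decreasing to 0 order converges to 0, being dominated by itself.
   (<=) Let |x_a| be eventually below y_b, where y decreases to 0, and let u >= 0
   and f be a continuous functional.  The Riesz-Kantorovich formula
   f+(w) = sup {f z | 0 <= z <= w} is additive on the positive cone (Riesz
   decomposition) and, by monotonicity of the norm, extends to a continuous
   functional.  For 0 <= z <= w, comparing f z and f (w - z) with f+(w) gives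
   |f z| <= |f+(w)| + |f w|.  Taking z = |x_a| u <= y_b u = w, the mw-convergence
   of y to 0 makes both terms on the right small. *)

Definition pos_part {E : zmodType} (join : E -> E -> E) (x : E) := join x 0.
Definition neg_part {E : zmodType} (join : E -> E -> E) (x : E) := join (- x) 0.

Section VectorLattice.
Context {R : realType} {E : normedModType R} {le : E -> E -> Prop} {join : E -> E -> E}.
Hypothesis HV : vector_lattice le join.

Lemma vl_lexx x : le x x.
Proof. by case: HV. Qed.

Lemma vl_le_anti {x y} : le x y -> le y x -> x = y.
Proof. by case: HV => _ [+ _]; apply. Qed.

Lemma vl_le_trans {x y z} : le x y -> le y z -> le x z.
Proof. by case: HV => _ [_ [+ _]]; apply. Qed.

Lemma vl_leD2r z {x y} : le x y -> le (x + z) (y + z).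
Proof. by case: HV => _ [_ [_ [+ _]]]; apply. Qed.

Lemma vl_leZ2l {a : R} {x y} : 0 <= a -> le x y -> le (a *: x) (a *: y).
Proof. by case: HV => _ [_ [_ [_ [+ _]]]]; apply. Qed.

Lemma vl_le_joinl x y : le x (join x y).
Proof. by case: HV => _ [_ [_ [_ [_ [/(_ x y) []]]]]]. Qed.

Lemma vl_le_joinr x y : le y (join x y).
Proof. by case: HV => _ [_ [_ [_ [_ [/(_ x y) [_ []]]]]]]. Qed.

Lemma vl_join_le {x y z} : le x z -> le y z -> le (join x y) z.
Proof. by case: HV => _ [_ [_ [_ [_ [/(_ x y) [_ [_ +]] _]]]]]; apply. Qed.

Lemma vl_leD2l z {x y} : le x y -> le (z + x) (z + y).
Proof. by rewrite ![z + _]addrC; apply: vl_leD2r. Qed.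

Lemma vl_leD {x y z w} : le x y -> le z w -> le (x + z) (y + w).
Proof. by move=> /(vl_leD2r z) xy /(vl_leD2l y); apply: vl_le_trans. Qed.

Lemma vl_subr_ge0 {x y} : le 0 (y - x) <-> le x y.
Proof.
split=> [/(vl_leD2r x)|/(vl_leD2r (- x))]; first by rewrite add0r subrK.
by rewrite subrr.
Qed.

Lemma vl_leN2 {x y} : le x y -> le (- y) (- x).
Proof. by move=> /(vl_leD2r (- x - y)); rewrite addrA subrr add0r addrCA subrr addr0. Qed.

Lemma vl_addr_ge0 {x y} : le 0 x -> le 0 y -> le 0 (x + y).
Proof. by move=> /vl_leD x0 /x0; rewrite addr0. Qed.

Lemma vl_scaler_ge0 {a : R} {x} : 0 <= a -> le 0 x -> le 0 (a *: x).
Proof. by move=> a0 x0; rewrite -(scaler0 _ a); apply: vl_leZ2l. Qed.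

Lemma vl_joinC x y : join x y = join y x.
Proof.
by apply: vl_le_anti; apply: vl_join_le; (apply: vl_le_joinl || apply: vl_le_joinr).
Qed.

Lemma vl_joinDr x y c : join (x + c) (y + c) = join x y + c.
Proof.
apply: vl_le_anti; first by apply: vl_join_le; apply: vl_leD2r;
  [apply: vl_le_joinl | apply: vl_le_joinr].
rewrite -[join (x + c) _](subrK c); apply: vl_leD2r; apply: vl_join_le;
  apply/vl_subr_ge0; rewrite -addrA -opprD (addrC c); apply/vl_subr_ge0;
  [apply: vl_le_joinl | apply: vl_le_joinr].
Qed.

Lemma vl_meet_lel x y : le (lat_meet join x y) x.
Proof. by rewrite -[x]opprK; apply: vl_leN2; rewrite opprK; apply: vl_le_joinl. Qed.

Lemma vl_meet_ler x y : le (lat_meet join x y) y.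
Proof. by rewrite -[y]opprK; apply: vl_leN2; rewrite opprK; apply: vl_le_joinr. Qed.

Lemma vl_le_meet {x y z} : le z x -> le z y -> le z (lat_meet join x y).
Proof.
by move=> zx zy; rewrite -[z]opprK; apply: vl_leN2; apply: vl_join_le; apply: vl_leN2.
Qed.

Lemma vl_abs_id {x} : le 0 x -> lat_abs join x = x.
Proof.
move=> x0; apply: vl_le_anti; last exact: vl_le_joinl.
apply: vl_join_le; first exact: vl_lexx.
by apply: (@vl_le_trans _ 0); first by rewrite -oppr0; apply: vl_leN2.
Qed.

Lemma vl_abs_ge0 x : le 0 (lat_abs join x).
Proof.
have : le 0 (2^-1 *: (lat_abs join x + lat_abs join x)).
  apply: vl_scaler_ge0; first by rewrite invr_ge0 ler0n.
  by rewrite -(subrr x); apply: vl_leD; [apply: vl_le_joinl | apply: vl_le_joinr].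
by rewrite -[X in X + X]scale1r -scalerDl scalerA mulVf ?pnatr_eq0 // scale1r.
Qed.

Lemma pos_part_ge0 x : le 0 (pos_part join x).
Proof. exact: vl_le_joinr. Qed.

Lemma neg_part_ge0 x : le 0 (neg_part join x).
Proof. exact: vl_le_joinr. Qed.

Lemma pos_partBneg_part x : pos_part join x - neg_part join x = x.
Proof.
by apply/eqP; rewrite subr_eq /neg_part addrC -vl_joinDr addNr add0r vl_joinC.
Qed.

Lemma pos_part_le_abs x : le (pos_part join x) (lat_abs join x).
Proof. by apply: vl_join_le; [apply: vl_le_joinl | apply: vl_abs_ge0]. Qed.

Lemma neg_part_le_abs x : le (neg_part join x) (lat_abs join x).
Proof. by apply: vl_join_le; [apply: vl_le_joinr | apply: vl_abs_ge0]. Qed.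

Lemma pos_part_id {x} : le 0 x -> pos_part join x = x.
Proof.
move=> x0; apply: vl_le_anti; last exact: vl_le_joinl.
by apply: vl_join_le; first exact: vl_lexx.
Qed.

Lemma neg_part_eq0 {x} : le 0 x -> neg_part join x = 0.
Proof.
move=> x0; apply: vl_le_anti; last exact: vl_le_joinr.
by apply: vl_join_le; [rewrite -oppr0; apply: vl_leN2 | apply: vl_lexx].
Qed.

Lemma vl_riesz_decomposition {z w1 w2} : le 0 z -> le 0 w1 -> le 0 w2 -> le z (w1 + w2) ->
  exists z1 z2, [/\ z = z1 + z2, le 0 z1, le z1 w1, le 0 z2 & le z2 w2].
Proof.
move=> z0 w10 w20 zw.
exists (lat_meet join z w1), (z - lat_meet join z w1); split.
- by rewrite addrC subrK.
- exact: vl_le_meet.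
- exact: vl_meet_ler.
- exact/vl_subr_ge0/vl_meet_lel.
rewrite /lat_meet opprK addrC -vl_joinDr; apply: vl_join_le; first by rewrite addNr.
by apply/vl_subr_ge0; rewrite opprD opprK addrA; apply/vl_subr_ge0; rewrite addrC.
Qed.

End VectorLattice.

Lemma linear_continuousP {R : realType} {E : normedModType R} {f : E -> R} :
  (forall x y, f (x + y) = f x + f y) -> (forall (a : R) x, f (a *: x) = a * f x) ->
  continuous f <-> exists2 M, 0 <= M & forall z, `|f z| <= M * `|z|.
Proof.
move=> fD fZ.
have lin : linear_for *:%R (f : E -> R^o) by move=> a x y; rewrite fD fZ.
pose fL : {linear E -> R^o} :=
  HB.pack (f : E -> R^o) (GRing.isLinear.Build R E R^o *:%R f lin).
have -> : continuous f <-> continuous fL by [].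
rewrite -linear_bounded_continuous linear_boundedP; split.
  by move=> /pinfty_ex_gt0 [M M0 fM]; exists M => //; apply: ltW.
move=> [M M0 fM]; near=> r => z; apply: le_trans (fM z) _.
by apply: ler_wpM2r => //; near: r; apply: nbhs_pinfty_ge; rewrite num_real.
Unshelve. all: by end_near. Qed.

Section RieszKantorovich.
Local Open Scope classical_set_scope.
Context {R : realType} {E : normedModType R} {le : E -> E -> Prop} {join : E -> E -> E}.
Hypothesis HV : vector_lattice le join.
Hypothesis norm_abs_mono :
  forall x y, le (lat_abs join x) (lat_abs join y) -> `|x| <= `|y|.

Lemma vl_norm_le z w : le 0 z -> le z w -> `|z| <= `|w|.
Proof.
move=> z0 zw; have w0 := vl_le_trans HV z0 zw.
by apply: norm_abs_mono; rewrite !(vl_abs_id HV).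
Qed.

Section Functional.
Variable f : E -> R.
Hypothesis fD : forall x y, f (x + y) = f x + f y.
Hypothesis fZ : forall (a : R) x, f (a *: x) = a * f x.
Variable M : R.
Hypothesis M_ge0 : 0 <= M.
Hypothesis f_le_norm : forall z, `|f z| <= M * `|z|.

Let f0 : f 0 = 0.
Proof. by rewrite -(scale0r 0) fZ mul0r. Qed.

Let fB x y : f (x - y) = f x - f y.
Proof. by rewrite fD -scaleN1r fZ mulN1r. Qed.

Let f_le_norm_ub z w : le 0 z -> le z w -> f z <= M * `|w|.
Proof.
move=> z0 zw; apply: le_trans (ler_norm _) (le_trans (f_le_norm z) _).
by apply: ler_wpM2l => //; apply: vl_norm_le.
Qed.

Definition fsup w := sup [set f z | z in [set z | le 0 z /\ le z w]].

Lemma fsup_ub z w : le 0 z -> le z w -> f z <= fsup w.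
Proof.
move=> z0 zw; apply: ub_le_sup; last by exists z.
by exists (M * `|w|) => _ [y [y0 yw] <-]; apply: f_le_norm_ub.
Qed.

Lemma fsup_le w c : le 0 w -> (forall z, le 0 z -> le z w -> f z <= c) -> fsup w <= c.
Proof.
move=> w0 fc; apply: ge_sup.
  by exists (f 0), 0 => //; split=> //; apply: vl_lexx HV 0.
by move=> _ [z [z0 zw] <-]; apply: fc.
Qed.

Lemma fsup_ge0 w : le 0 w -> 0 <= fsup w.
Proof. by move=> w0; rewrite -f0; apply: fsup_ub => //; apply: vl_lexx HV 0. Qed.

Lemma fsup_le_norm w : le 0 w -> fsup w <= M * `|w|.
Proof. by move=> w0; apply: fsup_le => // z; apply: f_le_norm_ub. Qed.

Lemma fsup0 : fsup 0 = 0.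
Proof.
apply/eqP; rewrite eq_le fsup_ge0 ?andbT; last exact: vl_lexx HV 0.
by apply: le_trans (fsup_le_norm _ (vl_lexx HV 0)) _; rewrite normr0 mulr0.
Qed.

Lemma fsupD w1 w2 : le 0 w1 -> le 0 w2 -> fsup (w1 + w2) = fsup w1 + fsup w2.
Proof.
move=> w10 w20; have w0 := vl_addr_ge0 HV w10 w20.
apply/eqP; rewrite eq_le; apply/andP; split.
  apply: fsup_le => // z z0 zw.
  have [z1 [z2 [-> z10 z1w z20 z2w]]] := vl_riesz_decomposition HV z0 w10 w20 zw.
  by rewrite fD; apply: lerD; apply: fsup_ub.
rewrite -lerBrDl; apply: fsup_le => // z2 z20 z2w.
rewrite lerBrDl -lerBrDr; apply: fsup_le => // z1 z10 z1w.
rewrite lerBrDr -fD; apply: fsup_ub; first exact: (vl_addr_ge0 HV z10 z20).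
exact: (vl_leD HV z1w z2w).
Qed.

Lemma fsupZ (a : R) w : 0 < a -> le 0 w -> fsup (a *: w) = a * fsup w.
Proof.
have fsupZ_le b v : 0 < b -> le 0 v -> fsup (b *: v) <= b * fsup v.
  move=> b0 v0; apply: fsup_le => [|z z0 zv]; first exact: (vl_scaler_ge0 HV (ltW b0) v0).
  have b'0 : 0 <= b^-1 by rewrite invr_ge0 ltW.
  rewrite -[z](scalerKV (lt0r_neq0 b0)) fZ; apply: ler_wpM2l; first exact: ltW.
  apply: fsup_ub; first exact: (vl_scaler_ge0 HV b'0 z0).
  by rewrite -[v](scalerK (lt0r_neq0 b0)); apply: (vl_leZ2l HV b'0 zv).
move=> a0 w0; apply/le_anti; rewrite fsupZ_le //=.
have a'0 : 0 < a^-1 by rewrite invr_gt0.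
have := fsupZ_le a^-1 _ a'0 (vl_scaler_ge0 HV (ltW a0) w0).
by rewrite scalerK ?lt0r_neq0 // ler_pdivlMl.
Qed.

Definition fplus x := fsup (pos_part join x) - fsup (neg_part join x).

Lemma fplusB_ge0 p q : le 0 p -> le 0 q -> fplus (p - q) = fsup p - fsup q.
Proof.
move=> p0 q0; set x := p - q.
have e : pos_part join x + q = p + neg_part join x.
  rewrite -[pos_part join x](subrK (neg_part join x)) (pos_partBneg_part HV).
  by rewrite /x addrAC subrK.
have xp := pos_part_ge0 HV x; have xn := neg_part_ge0 HV x.
by have := congr1 fsup e; rewrite !fsupD // /fplus; lra.
Qed.

Lemma fplus_id w : le 0 w -> fplus w = fsup w.
Proof. by move=> w0; rewrite /fplus (pos_part_id HV w0) (neg_part_eq0 HV w0) fsup0 subr0. Qed.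

Lemma fplusD x y : fplus (x + y) = fplus x + fplus y.
Proof.
have xp := pos_part_ge0 HV x; have xn := neg_part_ge0 HV x.
have yp := pos_part_ge0 HV y; have yn := neg_part_ge0 HV y.
have -> : x + y = (pos_part join x + pos_part join y) - (neg_part join x + neg_part join y).
  by rewrite opprD addrACA !(pos_partBneg_part HV).
have pp := vl_addr_ge0 HV xp yp; have nn := vl_addr_ge0 HV xn yn.
by rewrite fplusB_ge0 // !fsupD // /fplus; lra.
Qed.

Lemma fplusZ (a : R) x : fplus (a *: x) = a * fplus x.
Proof.
have xp := pos_part_ge0 HV x; have xn := neg_part_ge0 HV x.
have [a0|a0|->] := ltgtP a 0; last first.
- by rewrite scale0r mul0r fplus_id ?fsup0 //; exact: vl_lexx HV 0.
- have ap := vl_scaler_ge0 HV (ltW a0) xp; have an := vl_scaler_ge0 HV (ltW a0) xn.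
  rewrite -{1}(pos_partBneg_part HV x) scalerBr fplusB_ge0 // !fsupZ //.
  by rewrite /fplus; lra.
- have a'0 : 0 < - a by rewrite oppr_gt0.
  have ap := vl_scaler_ge0 HV (ltW a'0) xp; have an := vl_scaler_ge0 HV (ltW a'0) xn.
  have -> : a *: x = (- a) *: neg_part join x - (- a) *: pos_part join x.
    by rewrite -scalerBr -opprB (pos_partBneg_part HV) scaleNr scalerN opprK.
  by rewrite fplusB_ge0 // !fsupZ // /fplus; lra.
Qed.

Lemma fplus_le_norm x : `|fplus x| <= (M + M) * `|x|.
Proof.
have xp := pos_part_ge0 HV x; have xn := neg_part_ge0 HV x.
have np : `|pos_part join x| <= `|x|.
  by apply: norm_abs_mono; rewrite (vl_abs_id HV xp); exact: (pos_part_le_abs HV x).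
have nn : `|neg_part join x| <= `|x|.
  by apply: norm_abs_mono; rewrite (vl_abs_id HV xn); exact: (neg_part_le_abs HV x).
have := fsup_ge0 _ xp; have := fsup_ge0 _ xn.
have := fsup_le_norm _ xp; have := fsup_le_norm _ xn.
have := ler_wpM2l M_ge0 np; have := ler_wpM2l M_ge0 nn.
by rewrite /fplus mulrDl ler_norml => *; apply/andP; split; lra.
Qed.

Lemma fplus_clf : is_clf fplus.
Proof.
split; [exact: fplusD | exact: fplusZ |].
apply/(linear_continuousP fplusD fplusZ).
by exists (M + M); [rewrite addr_ge0 | apply: fplus_le_norm].
Qed.

Lemma norm_le_fplus z w : le 0 z -> le z w -> `|f z| <= `|fplus w| + `|f w|.
Proof.
move=> z0 zw; have w0 := vl_le_trans HV z0 zw.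
have up : f z <= fplus w by rewrite fplus_id //; apply: fsup_ub.
have lo : f (w - z) <= fplus w.
  rewrite fplus_id //; apply: fsup_ub; first exact/(vl_subr_ge0 HV).
  by apply/(vl_subr_ge0 HV); rewrite subKr.
have := normr_ge0 (f w); have := ler_norm (fplus w); have := ler_norm (- f w).
rewrite normrN.
by move: lo; rewrite fB ler_norml => *; apply/andP; split; lra.
Qed.

End Functional.

Lemma is_clf_dominated {f} : is_clf f ->
  exists2 g : E -> R, is_clf g & forall z w, le 0 z -> le z w -> `|f z| <= `|g w| + `|f w|.
Proof.
case=> fD fZ /(linear_continuousP fD fZ) [M M0 fM].
exists (fplus f); first exact: (fplus_clf _ fD fZ _ M0 fM).
exact: (norm_le_fplus _ fD fZ _ M0 fM).
Qed.

End RieszKantorovich.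

Lemma net_cvgR0_small2 {R : realType} {B : Type} {leB : B -> B -> Prop} {r s : B -> R} {e : R} :
  directed leB -> net_cvgR leB r 0 -> net_cvgR leB s 0 -> 0 < e ->
  exists b, `|r b| < e /\ `|s b| < e.
Proof.
case=> _ _ _ upB rcvg scvg e0.
have [b1 rb1] := rcvg e e0; have [b2 sb2] := scvg e e0.
have [b [b1b b2b]] := upB b1 b2.
by exists b; rewrite -[r b]subr0 -[s b]subr0; split; [apply: rb1 | apply: sb2].
Qed.

Lemma is_clf0 {R : realType} {E : normedModType R} {f : E -> R} : is_clf f -> f 0 = 0.
Proof. by case=> _ fZ _; rewrite -(scale0r 0) fZ mul0r. Qed.

Section MwConvergence.
Context {R : realType} {E : normedModType R} {le : E -> E -> Prop} {join : E -> E -> E}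
  {mul : E -> E -> E}.
Hypothesis HV : vector_lattice le join.
Hypothesis norm_abs_mono :
  forall x y, le (lat_abs join x) (lat_abs join y) -> `|x| <= `|y|.
Hypothesis mulDl : forall x y z, mul (x + y) z = mul x z + mul y z.
Hypothesis mul_ge0 : forall x y, le 0 x -> le 0 y -> le 0 (mul x y).

Lemma mul_le2r {u z w} : le 0 u -> le z w -> le (mul z u) (mul w u).
Proof.
move=> u0 zw; apply/(vl_subr_ge0 HV).
rewrite -[w in mul w u](subrK z) mulDl addrK.
by apply: mul_ge0 => //; apply/(vl_subr_ge0 HV).
Qed.

Lemma mw_cvg_dominated {D B : Type} {leD : D -> D -> Prop} {leB : B -> B -> Prop}
    {x : D -> E} {y : B -> E} :
  directed leB -> (forall b, le 0 (y b)) -> mw_cvg le join mul leB y 0 ->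
  (forall b, exists a0, forall a, leD a0 a -> le (lat_abs join (x a - 0)) (y b)) ->
  mw_cvg le join mul leD x 0.
Proof.
move=> dirB y0 ymw xdom u u0 f fclf e e0.
have [g gclf fdom] := is_clf_dominated HV norm_abs_mono fclf.
have yu_cvg h : is_clf h -> net_cvgR leB (fun b => h (mul (y b) u)) 0.
  move=> hclf e' e'0; have [b0 hb0] := ymw u u0 h hclf e' e'0.
  by exists b0 => b /hb0; rewrite !subr0 (vl_abs_id HV (y0 b)) (is_clf0 hclf) subr0.
have e20 : 0 < e / 2 by rewrite divr_gt0.
have [b [gb fb]] := net_cvgR0_small2 dirB (yu_cvg g gclf) (yu_cvg f fclf) e20.
have [a0 ha0] := xdom b.
exists a0 => a /ha0 xab; rewrite (is_clf0 fclf) subr0.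
have xu0 := mul_ge0 _ _ (vl_abs_ge0 HV (x a - 0)) u0.
apply: le_lt_trans (fdom _ _ xu0 (mul_le2r u0 xab)) _.
by rewrite [e]splitr ltrD.
Qed.

End MwConvergence.

Lemma decr_to_0_order_cvg {R : realType} {E : normedModType R}
    {le : E -> E -> Prop} {join : E -> E -> E} {D : Type} {leD : D -> D -> Prop} {x : D -> E} :
  vector_lattice le join -> directed leD -> decr_to_0 le leD x -> order_cvg le join leD x 0.
Proof.
move=> HV dirD xdecr; exists D, leD, x; split=> // b; case: xdecr => xle x0 _.
by exists b => a ba; rewrite subr0 (vl_abs_id HV (x0 a)); apply: xle.
Qed.

Theorem lemma2p16 (R : realType) (E : completeNormedModType R)
  (le : E -> E -> Prop) (join : E -> E -> E) (mul : E -> E -> E) :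
  banach_f_algebra le join mul ->
  (mw_continuous le join mul <->
   forall (D : Type) (leD : D -> D -> Prop), directed leD ->
     forall x : D -> E, decr_to_0 le leD x -> mw_cvg le join mul leD x 0).
Proof.
case=> [[HV [_ [mulDl [_ [_ [mul_ge0 _]]]]]] norm_abs_mono _]; split.
  by move=> mwc D leD dirD x xdecr; apply: mwc => //; apply: decr_to_0_order_cvg.
move=> decr_mw D leD _ x [B [leB [y [dirB ydecr xdom]]]].
have [_ y0 _] := ydecr.
exact: (mw_cvg_dominated HV norm_abs_mono mulDl mul_ge0 dirB y0
  (decr_mw B leB dirB y ydecr) xdom).
Qed.
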